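(* Let $L\in(0,\infty]$ and let $\gamma\in C^\infty([0,L),\mathbb{R}^2)$ be an arclength-parameterized plane curve with $\gamma(s)\neq0$ for all $s\in(0,L)$, with unit tangent $T=\gamma_s$, unit normal $N=R_{\pi/2}T$, signed curvature $\kappa$ ($\gamma_{ss}=\kappa N$) and polar tangential angle function $\omega:(0,L)\to\mathbb{R}$. Let $s\in(0,L)$ with $\kappa(s)\neq0$, and let $e(s):=\gamma(s)+\kappa(s)^{-1}N(s)$ (the center of the osculating circle). Then: (i) $\kappa(s)\omega_s(s)$ and $\gamma(s)\cdot e(s)$ have the same sign; (ii) equivalently, letting $\hat c(s)$ be the circle having the segment from $\gamma(s)$ to $e(s)$ as a diameter, $\kappa(s)\omega_s(s)>0$ iff the origin lies outside $\hat c(s)$, $\kappa(s)\omega_s(s)<0$ iff the origin lies inside $\hat c(s)$, and $\kappa(s)\omega_s(s)=0$ iff the origin lies on $\hat c(s)$; (iii) in particular, if the origin does not belong to the open disk $D(s)$ of radius $1/|\kappa(s)|$ centered at $e(s)$ (the disk enclosed by the osculating circle), then $\kappa(s)\omega_s(s)>0$.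
   Context: $R_\theta$ denotes counterclockwise rotation by angle $\theta$. With $X:=\gamma/|\gamma|$ on $(0,L)$, a polar tangential angle function is a smooth $\omega:(0,L)\to\mathbb{R}$ with $R_{\omega(s)}X(s)=T(s)$ for all $s\in(0,L)$. *)

From Stdlib Require Import Reals.
From Coquelicot Require Import Coquelicot.
Open Scope R_scope.

Definition dot (u v : R * R) : R := fst u * fst v + snd u * snd v.
Definition vnorm (u : R * R) : R := sqrt (dot u u).
Definition vadd (u v : R * R) : R * R := (fst u + fst v, snd u + snd v).
Definition vscale (a : R) (u : R * R) : R * R := (a * fst u, a * snd u).

Definition rot (th : R) (u : R * R) : R * R :=
  (cos th * fst u - sin th * snd u, sin th * fst u + cos th * snd u).

Definition cx (g : R -> R * R) : R -> R := fun t => fst (g t).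
Definition cy (g : R -> R * R) : R -> R := fun t => snd (g t).

Definition in0L (L : Rbar) (t : R) : Prop := 0 < t /\ Rbar_lt t L.

(* f is C^oo on [0, L): all derivatives exist on (0, L), f is right-continuous
   at 0, and every derivative extends continuously to 0 from the right. *)
Definition smooth_0L (L : Rbar) (f : R -> R) : Prop :=
  (forall n t, in0L L t -> ex_derive_n f n t) /\
  filterlim f (at_right 0) (locally (f 0)) /\
  (forall n, exists l : R, filterlim (Derive_n f n) (at_right 0) (locally l)).

Definition smooth_curve_0L (L : Rbar) (g : R -> R * R) : Prop :=
  smooth_0L L (cx g) /\ smooth_0L L (cy g).

Definition smooth_open_0L (L : Rbar) (f : R -> R) : Prop :=
  forall n t, in0L L t -> ex_derive_n f n t.

Definition tangent (g : R -> R * R) (t : R) : R * R :=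
  (Derive (cx g) t, Derive (cy g) t).

(* arclength parameterization on [0, L) (|gamma_s| = 1; at 0 this follows by
   continuity of the extended derivative) *)
Definition arclength (L : Rbar) (g : R -> R * R) : Prop :=
  forall t, in0L L t -> vnorm (tangent g t) = 1.

Definition normal (g : R -> R * R) (t : R) : R * R := rot (PI / 2) (tangent g t).

Definition accel (g : R -> R * R) (t : R) : R * R :=
  (Derive_n (cx g) 2 t, Derive_n (cy g) 2 t).

Definition is_signed_curvature (L : Rbar) (g : R -> R * R) (kappa : R -> R) : Prop :=
  forall t, in0L L t -> accel g t = vscale (kappa t) (normal g t).

Definition radial_dir (g : R -> R * R) (t : R) : R * R :=
  vscale (/ vnorm (g t)) (g t).

Definition polar_tangential_angle (L : Rbar) (g : R -> R * R) (omega : R -> R) : Prop :=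
  smooth_open_0L L omega /\
  forall t, in0L L t -> rot (omega t) (radial_dir g t) = tangent g t.

Definition osc_center (g : R -> R * R) (kappa : R -> R) (t : R) : R * R :=
  vadd (g t) (vscale (/ kappa t) (normal g t)).

From Stdlib Require Import Reals Lra Psatz.
From Coquelicot Require Import Coquelicot.
Open Scope R_scope.

(* Writing the polar relation R_omega X = T as
   cross(gamma, T) cos omega = (gamma . T) sin omega and differentiating it,
   with gamma_ss = kappa N and |T| = 1, gives the polar angle formula
   omega_s = kappa - cross(gamma, T) / |gamma|^2.  As
   gamma . e = |gamma|^2 - cross(gamma, T) / kappa, this reads
   kappa omega_s |gamma|^2 = kappa^2 (gamma . e), which is (i).  For (ii), the
   centre m and radius r of the circle with diameter [gamma, e] satisfy
   |m|^2 - r^2 = gamma . e.  For (iii), |e - gamma| = 1/|kappa| <= |e| forces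
   2 gamma . e = |gamma|^2 + |e|^2 - |e - gamma|^2 > 0. *)

Definition cross (u v : R * R) : R := fst u * snd v - snd u * fst v.

Lemma dot_self_ge0 (u : R * R) : 0 <= dot u u.
Proof. destruct u as [x y]; unfold dot; simpl; nra. Qed.

Lemma dot_self_gt0 (u : R * R) : u <> (0, 0) -> 0 < dot u u.
Proof.
  destruct u as [x y]; unfold dot; simpl; intros Hu.
  destruct (Req_dec x 0) as [-> | Hx]; [destruct (Req_dec y 0) as [-> | Hy] |];
    [congruence | nra | nra].
Qed.

Lemma vnorm_ge0 (u : R * R) : 0 <= vnorm u.
Proof. apply sqrt_pos. Qed.

Lemma vnorm_sqr (u : R * R) : vnorm u * vnorm u = dot u u.
Proof. apply sqrt_sqrt, dot_self_ge0. Qed.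

Lemma vnorm_scale (c : R) (u : R * R) : vnorm (vscale c u) = Rabs c * vnorm u.
Proof.
  unfold vnorm; rewrite <- sqrt_Rsqr_abs, <- sqrt_mult_alt by apply Rle_0_sqr.
  f_equal; destruct u; unfold dot, vscale, Rsqr; simpl; ring.
Qed.

Lemma dot_rot_scale (w c : R) (u : R * R) :
  dot u (rot w (vscale c u)) = c * dot u u * cos w.
Proof. destruct u; unfold dot, rot, vscale; simpl; ring. Qed.

Lemma cross_rot_scale (w c : R) (u : R * R) :
  cross u (rot w (vscale c u)) = c * dot u u * sin w.
Proof. destruct u; unfold cross, dot, rot, vscale; simpl; ring. Qed.

Lemma dot_rot_radial (w : R) (u : R * R) :
  u <> (0, 0) -> dot u (rot w (vscale (/ vnorm u) u)) = vnorm u * cos w.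
Proof.
  intros Hu; assert (0 < vnorm u) by apply sqrt_lt_R0, dot_self_gt0, Hu.
  rewrite dot_rot_scale, <- vnorm_sqr; field; lra.
Qed.

Lemma cross_rot_radial (w : R) (u : R * R) :
  u <> (0, 0) -> cross u (rot w (vscale (/ vnorm u) u)) = vnorm u * sin w.
Proof.
  intros Hu; assert (0 < vnorm u) by apply sqrt_lt_R0, dot_self_gt0, Hu.
  rewrite cross_rot_scale, <- vnorm_sqr; field; lra.
Qed.

Lemma dot_vscale_r (c : R) (u v : R * R) : dot u (vscale c v) = c * dot u v.
Proof. unfold dot, vscale; simpl; ring. Qed.

Lemma cross_vscale_r (c : R) (u v : R * R) : cross u (vscale c v) = c * cross u v.
Proof. unfold cross, vscale; simpl; ring. Qed.

Lemma diametral_circle_position (a b : R * R) :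
  let m := vscale (/ 2) (vadd a b) in
  let r := vnorm (vadd b (vscale (-1) a)) / 2 in
  (r < vnorm m <-> 0 < dot a b) /\
  (vnorm m < r <-> dot a b < 0) /\
  (vnorm m = r <-> dot a b = 0).
Proof.
  intros m r; set (d := vadd b (vscale (-1) a)) in r.
  assert (Hmr : vnorm m * vnorm m = r * r + dot a b).
  { transitivity (vnorm d * vnorm d / 4 + dot a b); [| unfold r; field].
    rewrite !vnorm_sqr; unfold m, d; destruct a, b; unfold dot, vadd, vscale; simpl; field. }
  pose proof (vnorm_ge0 m).
  assert (0 <= r) by (unfold r; pose proof (vnorm_ge0 d); lra).
  repeat split; intros; nra.
Qed.

Lemma dot_pos_outside_ball (a b : R * R) :
  a <> (0, 0) -> vnorm (vadd b (vscale (-1) a)) <= vnorm b -> 0 < dot a b.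
Proof.
  intros Ha Hout.
  assert (Hsq : dot (vadd b (vscale (-1) a)) (vadd b (vscale (-1) a)) <= dot b b).
  { rewrite <- !vnorm_sqr; pose proof (vnorm_ge0 (vadd b (vscale (-1) a))); nra. }
  pose proof (dot_self_gt0 a Ha).
  destruct a, b; unfold dot, vadd, vscale in *; simpl in *; nra.
Qed.

Lemma same_sign_of_mul_pos (x y a b : R) :
  0 < a -> 0 < b -> x * a = b * y ->
  (0 < x <-> 0 < y) /\ (x < 0 <-> y < 0) /\ (x = 0 <-> y = 0).
Proof. intros; repeat split; intros; nra. Qed.

Lemma in0L_locally (L : Rbar) (s : R) : in0L L s -> locally s (in0L L).
Proof.
  intros [Hs HsL].
  destruct L as [l | |]; simpl in HsL; try contradiction.
  - assert (Hd : 0 < Rmin s (l - s)) by (apply Rmin_pos; lra).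
    exists (mkposreal _ Hd); intros t Ht.
    apply Rabs_def2 in Ht; change (minus t s) with (t - s) in Ht; simpl in Ht.
    pose proof (Rmin_l s (l - s)); pose proof (Rmin_r s (l - s)).
    split; simpl; lra.
  - exists (mkposreal _ Hs); intros t Ht.
    apply Rabs_def2 in Ht; change (minus t s) with (t - s) in Ht; simpl in Ht.
    split; [lra | exact I].
Qed.

Lemma normal_tangent (g : R -> R * R) (t : R) :
  normal g t = (- snd (tangent g t), fst (tangent g t)).
Proof.
  unfold normal, rot; rewrite cos_PI2, sin_PI2; f_equal; ring.
Qed.

Lemma dot_normal (u : R * R) (g : R -> R * R) (t : R) :
  dot u (normal g t) = - cross u (tangent g t).
Proof. rewrite normal_tangent; unfold dot, cross; simpl; ring. Qed.

Lemma cross_normal (u : R * R) (g : R -> R * R) (t : R) :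
  cross u (normal g t) = dot u (tangent g t).
Proof. rewrite normal_tangent; unfold dot, cross; simpl; ring. Qed.

Lemma cross_normal_tangent (g : R -> R * R) (t : R) :
  cross (normal g t) (tangent g t) = - dot (tangent g t) (tangent g t).
Proof. rewrite normal_tangent; unfold dot, cross; simpl; ring. Qed.

Lemma dot_tangent_unit (L : Rbar) (g : R -> R * R) (t : R) :
  arclength L g -> in0L L t -> dot (tangent g t) (tangent g t) = 1.
Proof. intros Harc Ht; rewrite <- vnorm_sqr, (Harc t Ht); ring. Qed.

Definition polar_defect (g : R -> R * R) (omega : R -> R) (t : R) : R :=
  cross (g t) (tangent g t) * cos (omega t) - dot (g t) (tangent g t) * sin (omega t).

Lemma polar_defect_eq0 (L : Rbar) (g : R -> R * R) (omega : R -> R) (t : R) :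
  polar_tangential_angle L g omega -> in0L L t -> polar_defect g omega t = 0.
Proof.
  intros [_ Hpol] Ht; unfold polar_defect, radial_dir in *.
  rewrite <- (Hpol t Ht), dot_rot_scale, cross_rot_scale; ring.
Qed.

Lemma is_derive_polar_defect (g : R -> R * R) (omega : R -> R) (s : R) :
  ex_derive (cx g) s -> ex_derive (cy g) s ->
  ex_derive (Derive (cx g)) s -> ex_derive (Derive (cy g)) s ->
  ex_derive omega s ->
  let T := tangent g s in
  is_derive (polar_defect g omega) s
    (cross (g s) (accel g s) * cos (omega s)
     - (dot T T + dot (g s) (accel g s)) * sin (omega s)
     - (cross (g s) T * sin (omega s) + dot (g s) T * cos (omega s)) * Derive omega s).
Proof.
  intros Hx Hy Hx' Hy' Hw T.
  apply is_derive_ext with (f := fun t =>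
    (cx g t * Derive (cy g) t - cy g t * Derive (cx g) t) * cos (omega t)
    - (cx g t * Derive (cx g) t + cy g t * Derive (cy g) t) * sin (omega t));
    [reflexivity |].
  auto_derive; [repeat split; assumption |].
  unfold T, accel, tangent, cross, dot, cx, cy; simpl.
  change (fun x => omega x) with omega; ring.
Qed.

Lemma polar_angle_derivative (L : Rbar) (g : R -> R * R) (kappa omega : R -> R) (s : R) :
  smooth_curve_0L L g -> arclength L g -> is_signed_curvature L g kappa ->
  polar_tangential_angle L g omega -> in0L L s -> g s <> (0, 0) ->
  Derive omega s = kappa s - cross (g s) (tangent g s) / dot (g s) (g s).
Proof.
  intros [[Hx _] [Hy _]] Harc Hcurv Hpol Hs Hg.
  assert (Hder0 : is_derive (polar_defect g omega) s 0).
  { apply is_derive_ext_loc with (f := fun _ => 0); [| exact (is_derive_const 0 s)].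
    apply (filter_imp (in0L L)); [| exact (in0L_locally L s Hs)].
    intros t Ht; symmetry; exact (polar_defect_eq0 L g omega t Hpol Ht). }
  pose proof (is_derive_unique _ _ _ (is_derive_polar_defect g omega s
    (Hx 1%nat s Hs) (Hy 1%nat s Hs) (Hx 2%nat s Hs) (Hy 2%nat s Hs)
    (proj1 Hpol 1%nat s Hs))) as Hdefect.
  rewrite (is_derive_unique _ _ _ Hder0) in Hdefect.
  rewrite (Hcurv s Hs), dot_vscale_r, cross_vscale_r, dot_normal, cross_normal,
    (dot_tangent_unit L g s Harc Hs) in Hdefect.
  assert (Hpolar : tangent g s = rot (omega s) (vscale (/ vnorm (g s)) (g s)))
    by (symmetry; exact (proj2 Hpol s Hs)).
  rewrite Hpolar, dot_rot_radial, cross_rot_radial in Hdefect by exact Hg.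
  rewrite Hpolar, cross_rot_radial, <- vnorm_sqr by exact Hg.
  set (rho := vnorm (g s)) in *.
  assert (Hrho : 0 < rho) by (apply sqrt_lt_R0, dot_self_gt0, Hg).
  pose proof (sin2_cos2 (omega s)) as Hpyth; unfold Rsqr in Hpyth.
  assert (Hlin : rho * (kappa s - Derive omega s) - sin (omega s) = 0).
  { transitivity ((rho * (kappa s - Derive omega s))
                    * (sin (omega s) * sin (omega s) + cos (omega s) * cos (omega s))
                   - sin (omega s)); [rewrite Hpyth; ring |].
    rewrite Hdefect; ring. }
  field_simplify_eq; [nra | lra].
Qed.

Lemma osc_center_dot (g : R -> R * R) (kappa : R -> R) (t : R) :
  dot (g t) (osc_center g kappa t) = dot (g t) (g t) - cross (g t) (tangent g t) / kappa t.
Proof.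
  unfold osc_center; rewrite normal_tangent.
  unfold dot, cross, vadd, vscale, Rdiv; simpl; ring.
Qed.

Lemma vnorm_osc_radius (L : Rbar) (g : R -> R * R) (kappa : R -> R) (t : R) :
  arclength L g -> in0L L t ->
  vnorm (vadd (osc_center g kappa t) (vscale (-1) (g t))) = / Rabs (kappa t).
Proof.
  intros Harc Ht.
  replace (vadd (osc_center g kappa t) (vscale (-1) (g t)))
    with (vscale (/ kappa t) (normal g t))
    by (unfold osc_center, vadd, vscale; simpl; f_equal; ring).
  rewrite vnorm_scale, Rabs_inv.
  replace (vnorm (normal g t)) with 1; [ring |].
  unfold vnorm; rewrite dot_normal, cross_normal_tangent, (dot_tangent_unit L g t Harc Ht).
  rewrite Ropp_involutive, sqrt_1; reflexivity.
Qed.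

Lemma curvature_angle_derivative_osc_center
    (L : Rbar) (g : R -> R * R) (kappa omega : R -> R) (s : R) :
  smooth_curve_0L L g -> arclength L g -> is_signed_curvature L g kappa ->
  polar_tangential_angle L g omega -> in0L L s -> g s <> (0, 0) -> kappa s <> 0 ->
  kappa s * Derive omega s * dot (g s) (g s)
  = kappa s * kappa s * dot (g s) (osc_center g kappa s).
Proof.
  intros Hsm Harc Hcurv Hpol Hs Hg Hk.
  pose proof (dot_self_gt0 _ Hg).
  rewrite (polar_angle_derivative L g kappa omega s Hsm Harc Hcurv Hpol Hs Hg), osc_center_dot.
  field; lra.
Qed.

Theorem corollary2p5
  (L : Rbar) (gamma : R -> R * R) (kappa omega : R -> R) (s : R) :
  Rbar_lt 0 L ->
  smooth_curve_0L L gamma ->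
  arclength L gamma ->
  (forall t, in0L L t -> gamma t <> (0, 0)) ->
  is_signed_curvature L gamma kappa ->
  polar_tangential_angle L gamma omega ->
  in0L L s ->
  kappa s <> 0 ->
  let e := osc_center gamma kappa s in
  let k_ws := kappa s * Derive omega s in
  (* center and radius of the circle c^(s) with diameter [gamma(s), e(s)] *)
  let m := vscale (/ 2) (vadd (gamma s) e) in
  let r := vnorm (vadd e (vscale (-1) (gamma s))) / 2 in
  (* (i) same sign *)
  ((0 < k_ws <-> 0 < dot (gamma s) e) /\
   (k_ws < 0 <-> dot (gamma s) e < 0) /\
   (k_ws = 0 <-> dot (gamma s) e = 0)) /\
  (* (ii) position of the origin relative to c^(s) *)
  ((0 < k_ws <-> r < vnorm m) /\
   (k_ws < 0 <-> vnorm m < r) /\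
   (k_ws = 0 <-> vnorm m = r)) /\
  (* (iii) origin outside the open osculating disk D(s) *)
  (~ (vnorm e < / Rabs (kappa s)) -> 0 < k_ws).
Proof.
  intros _ Hsm Harc Hnz Hcurv Hpol Hs Hk e k_ws m r.
  pose proof (Hnz s Hs) as Hg.
  assert (Hsign : (0 < k_ws <-> 0 < dot (gamma s) e) /\
                  (k_ws < 0 <-> dot (gamma s) e < 0) /\
                  (k_ws = 0 <-> dot (gamma s) e = 0)).
  { apply (same_sign_of_mul_pos _ _ (dot (gamma s) (gamma s)) (kappa s * kappa s)).
    - exact (dot_self_gt0 _ Hg).
    - apply Rsqr_pos_lt, Hk.
    - exact (curvature_angle_derivative_osc_center L gamma kappa omega s
               Hsm Harc Hcurv Hpol Hs Hg Hk). }
  destruct (diametral_circle_position (gamma s) e) as (Hout & Hin & Hon).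
  split; [exact Hsign |]; split.
  - fold m r in Hout, Hin, Hon; rewrite Hout, Hin, Hon; exact Hsign.
  - intros Hfar; apply Hsign, (dot_pos_outside_ball _ _ Hg).
    unfold e; rewrite (vnorm_osc_radius L gamma kappa s Harc Hs).
    apply Rnot_lt_le, Hfar.
Qed.
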